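(* Assume (A1)–(A5) hold, and let $\{u_k\}_{k\ge0}$ be the exact-data iteration defined below. Then $u_k\in\mathcal B_\wp(u^\dagger)$ for all $k\ge0$, and $$\|u_{k+1}-u^\dagger\|^2-\|u_k-u^\dagger\|^2\le-2\mathcal C_0\|\mathcal F(u_k)-v\|^2\qquad\text{for all }k\ge0,$$ where $\mathcal C_0:=(1-\eta)\zeta-\nu_0(\wp+\nu_1)-\zeta_0^2>0$. Consequently $\{\|u_k-u^\dagger\|\}_{k\ge0}$ is monotonically decreasing, and $$\sum_{k=0}^\infty\|\mathcal F(u_k)-v\|^2\le\frac1{2\mathcal C_0}\|u_0-u^\dagger\|^2<\infty .$$
   Context: Spaces and operator. Let $\mathcal U=\mathbb R^N$ and $\mathcal V=\mathbb R^M$ carry the Euclidean inner product and norm. Let $\mathcal F:\mathcal D(\mathcal F)\subset\mathcal U\to\mathcal V$ be a (possibly nonlinear) operator, let $v\in\mathcal V$ be exact data, and let $\mathcal B_r(x)$ denote the closed ball of radius $r$ centred at $x$. Images and graph Laplacian. Elements of $\mathcal U$ are images on a pixel grid $\mathcal S=\{1,\dots,p\}\times\{1,\dots,q\}$ with $N=pq$. Fix $R\in(0,\infty)$, $\lambda>0$ and a metric $d$ on $\mathcal S$. For $u\in\mathcal U$, define $$(W_u)_{ab}=\mathbf 1_{(0,R]}(d(a,b))\exp(-|u(a)-u(b)|^2/\lambda),$$ let $D_u$ be the diagonal matrix of row sums of $W_u$, and set $\Delta_u=D_u-W_u$. Exact-data iteration. Let $\Psi:\mathcal V\to\mathcal U$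 be a reconstruction map and set $u_0=\Psi(v)$. Define $$u_{k+1}=u_k-\alpha_k\mathcal F'(u_k)^*\big(\mathcal F(u_k)-v\big)-\beta_k\Delta_{u_k}u_k,$$ with $$\alpha_k=\min\Big\{\frac{\zeta_0\|\mathcal F(u_k)-v\|}{\|\mathcal F'(u_k)^*(\mathcal F(u_k)-v)\|},\zeta_1\Big\}.$$ If $\|\Delta_{u_k}u_k\|\ne0$, then $$\beta_k=\min\Big\{\frac{\nu_0\|\mathcal F(u_k)-v\|^2}{\|\Delta_{u_k}u_k\|},\frac{\nu_1}{\|\Delta_{u_k}u_k\|},\nu_2\Big\},$$ and otherwise $\beta_k=0$. Here $\zeta_0,\zeta_1,\nu_0,\nu_1,\nu_2>0$ are constants, and $\zeta>0$ is a constant with $\zeta\le\alpha_k$ for all $k$. Operator assumptions. There exist $\wp>0$, $B>0$, $\eta\in[0,1)$ and $L\ge0$ such that for all $u,w\in\mathcal B_{3\wp}(u_0)\subset\mathcal D(\mathcal F)$: - (A1) $\mathcal F$ is Fréchet differentiable with $u\mapsto\mathcal F'(u)$ continuous; - (A2) $\|\mathcal F'(u)\|\le B$; - (A3) $\|\mathcal F(u)-\mathcal F(w)-\mathcal F'(w)(u-w)\|\le\eta\|\mathcal F(u)-\mathcal F(w)\|$; - (A4) $\|\mathcal F'(u)-\mathcal F'(w)\|\le L\|u-w\|$; - (A5) there exists $u^\dagger\in\mathcal B_\wp(u_0)$ with $\mathcal F(u^\dagger)=v$. Standing parameter condition. Fix $\mathcal H>\frac{1+\eta}{1-\eta}$.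 The constant $\zeta$ is assumed to satisfy $$\zeta>\frac{\nu_0(\wp+\nu_1)+\zeta_0^2}{1-\eta-\frac{1+\eta}{\mathcal H}} .$$ *)

From HB Require Import structures.
From mathcomp Require Import all_boot all_order all_algebra.
From mathcomp Require Import reals sequences exp.
Set Implicit Arguments. Unset Strict Implicit. Unset Printing Implicit Defensive.
Import Order.TTheory GRing.Theory Num.Theory.
Local Open Scope ring_scope.

Definition dotp {R : realType} {I : finType} (x y : {ffun I -> R}) : R :=
  \sum_i x i * y i.
Definition nrm {R : realType} {I : finType} (x : {ffun I -> R}) : R :=
  Num.sqrt (dotp x x).

Definition inball {R : realType} {I : finType} (c : {ffun I -> R}) (r : R)
  (x : {ffun I -> R}) : Prop := nrm (x - c) <= r.

(* A linear map R^J -> R^I given by its matrix A (entries A i j),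
   and its Euclidean adjoint (the transpose). *)
Definition app {R : realType} {I J : finType} (A : I -> J -> R)
  (h : {ffun J -> R}) : {ffun I -> R} := [ffun i => \sum_j A i j * h j].
Definition adj {R : realType} {I J : finType} (A : I -> J -> R)
  (r : {ffun I -> R}) : {ffun J -> R} := [ffun j => \sum_i A i j * r i].

Definition frechet_at {R : realType} {I J : finType}
  (F : {ffun J -> R} -> {ffun I -> R}) (A : I -> J -> R) (u : {ffun J -> R}) :=
  forall eps : R, 0 < eps -> exists delta : R, 0 < delta /\
    forall h : {ffun J -> R}, nrm h < delta ->
      nrm (F (u + h) - F u - app A h) <= eps * nrm h.

(* Pixel grid S = {1..p} x {1..q}; images are elements of R^S, N = p q. *)
Definition pixel (p q : nat) : finType := ('I_p * 'I_q)%type.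

Definition Wgt {R : realType} {S : finType} (d : S -> S -> R) (Rr lam : R)
  (u : {ffun S -> R}) (a b : S) : R :=
  if (0 < d a b) && (d a b <= Rr) then expR (- (`|u a - u b| ^+ 2) / lam) else 0.

(* Delta_u w = (D_u - W_u) w, D_u diagonal matrix of row sums of W_u *)
Definition lap {R : realType} {S : finType} (d : S -> S -> R) (Rr lam : R)
  (u w : {ffun S -> R}) : {ffun S -> R} :=
  [ffun a => (\sum_b Wgt d Rr lam u a b) * w a - \sum_b Wgt d Rr lam u a b * w b].

Section Iteration.
Context {R : realType} {S I : finType}
  (F : {ffun S -> R} -> {ffun I -> R}) (Jac : {ffun S -> R} -> I -> S -> R)
  (v : {ffun I -> R}) (Psi : {ffun I -> R} -> {ffun S -> R})
  (d : S -> S -> R) (Rr lam z0 z1 n0 n1 n2 : R).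

(* step size alpha_k (MathComp convention x / 0 = 0) *)
Definition alpha_of (u : {ffun S -> R}) : R :=
  Num.min (z0 * nrm (F u - v) / nrm (adj (Jac u) (F u - v))) z1.

Definition beta_of (u : {ffun S -> R}) : R :=
  let Lu := lap d Rr lam u u in
  if nrm Lu != 0 then
    Num.min (Num.min (n0 * nrm (F u - v) ^+ 2 / nrm Lu) (n1 / nrm Lu)) n2
  else 0.

Definition step (u : {ffun S -> R}) : {ffun S -> R} :=
  [ffun a => u a - alpha_of u * adj (Jac u) (F u - v) a
                  - beta_of u * lap d Rr lam u u a].

Fixpoint iterate (k : nat) : {ffun S -> R} :=
  match k with 0 => Psi v | k'.+1 => step (iterate k') end.
End Iteration.

(* Write e_k = u_k - u† and r_k = F(u_k) - v.  Since F(u†) = v, the tangential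
   cone condition (A3) at (u†, u_k) says that F'(u_k) e_k is within η‖r_k‖ of
   r_k, hence <e_k, F'(u_k)^* r_k> = <F'(u_k) e_k, r_k> ≥ (1 - η)‖r_k‖².
   Expanding ‖e_{k+1}‖² = ‖e_k - α_k g_k - β_k Δ_k‖² and using α_k ≥ ζ, the
   caps α_k‖g_k‖ ≤ ζ₀‖r_k‖ and β_k‖Δ_k‖ ≤ min(ν₀‖r_k‖², ν₁) built into the step
   sizes, and ‖e_k‖ ≤ ℘, bounds the increment by -2C₀‖r_k‖².  The standing
   parameter condition gives C₀ > 0, so by induction the iterates stay in
   B_℘(u†) ⊂ B_{3℘}(u₀), where (A3) is available, and the increments telescope. *)
From HB Require Import structures.
From mathcomp Require Import all_boot all_order all_algebra.
From mathcomp Require Import reals sequences exp.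
From mathcomp Require Import ring lra.
Import Order.TTheory GRing.Theory Num.Theory.
Local Open Scope ring_scope.
Set Implicit Arguments. Unset Strict Implicit. Unset Printing Implicit Defensive.

Section InnerProduct.
Variables (R : realType) (I : finType).
Implicit Types (x y z : {ffun I -> R}) (a : R).

Definition scalef a x : {ffun I -> R} := [ffun i => a * x i].

Lemma dotpC x y : dotp x y = dotp y x.
Proof. by apply: eq_bigr => i _; rewrite mulrC. Qed.

Lemma dotpDl x y z : dotp (x + y) z = dotp x z + dotp y z.
Proof. by rewrite /dotp -big_split; apply: eq_bigr => i _; rewrite ffunE mulrDl. Qed.

Lemma dotpNl x y : dotp (- x) y = - dotp x y.
Proof. by rewrite /dotp -sumrN; apply: eq_bigr => i _; rewrite ffunE mulNr. Qed.

Lemma dotpBl x y z : dotp (x - y) z = dotp x z - dotp y z.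
Proof. by rewrite dotpDl dotpNl. Qed.

Lemma dotpZl a x y : dotp (scalef a x) y = a * dotp x y.
Proof. by rewrite /dotp mulr_sumr; apply: eq_bigr => i _; rewrite ffunE mulrA. Qed.

Lemma dotpDr x y z : dotp x (y + z) = dotp x y + dotp x z.
Proof. by rewrite dotpC dotpDl !(dotpC x). Qed.

Lemma dotpBr x y z : dotp x (y - z) = dotp x y - dotp x z.
Proof. by rewrite dotpC dotpBl !(dotpC x). Qed.

Lemma dotpZr a x y : dotp x (scalef a y) = a * dotp x y.
Proof. by rewrite dotpC dotpZl dotpC. Qed.

Lemma dotpp_ge0 x : 0 <= dotp x x.
Proof. by apply: sumr_ge0 => i _; rewrite sqr_ge0. Qed.

Lemma dotpp_eq0 x y : dotp x x = 0 -> dotp x y = 0.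
Proof.
move=> /psumr_eq0P x0; rewrite /dotp big1 // => i _.
have /eqP := x0 (fun j _ => sqr_ge0 (x j)) i isT.
by rewrite mulf_eq0 orbb => /eqP ->; rewrite mul0r.
Qed.

Lemma nrm_ge0 x : 0 <= nrm x.
Proof. exact: sqrtr_ge0. Qed.

Lemma sqr_nrm x : nrm x ^+ 2 = dotp x x.
Proof. by rewrite sqr_sqrtr // dotpp_ge0. Qed.

Lemma nrmN x : nrm (- x) = nrm x.
Proof. by rewrite /nrm dotpNl dotpC dotpNl opprK. Qed.

Lemma nrm_distC x y : nrm (x - y) = nrm (y - x).
Proof. by rewrite -nrmN opprB. Qed.

Lemma nrmZ a x : nrm (scalef a x) = `|a| * nrm x.
Proof. by rewrite /nrm dotpZl dotpZr mulrA -expr2 sqrtrM ?sqr_ge0 // sqrtr_sqr. Qed.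

Lemma dotp_le_nrm x y : dotp x y <= nrm x * nrm y.
Proof.
set A := dotp x x; set B := dotp y y; set C := dotp x y.
have CA_le : C ^+ 2 <= A * B.
  have [A0|A_neq0] := eqVneq A 0; first by rewrite /C dotpp_eq0 // A0 expr0n mul0r.
  have A_gt0 : 0 < A by rewrite lt_neqAle eq_sym A_neq0 dotpp_ge0.
  (* ‖C x - A y‖² = A (A B - C²) *)
  have := dotpp_ge0 (scalef C x - scalef A y).
  rewrite !(dotpBl, dotpBr, dotpZl, dotpZr) (dotpC y x) -/A -/B -/C.
  have -> : C * (C * A) - C * (A * C) - (A * (C * C) - A * (A * B))
            = A * (A * B - C ^+ 2) by ring.
  by rewrite pmulr_rge0 // subr_ge0.
rewrite /nrm -sqrtrM ?dotpp_ge0 // -/A -/B.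
apply: le_trans (ler_norm C) _.
by rewrite -sqrtr_sqr ler_sqrt // mulr_ge0 ?dotpp_ge0.
Qed.

Lemma ler_nrmD x y : nrm (x + y) <= nrm x + nrm y.
Proof.
rewrite -ler_sqr ?nnegrE ?addr_ge0 ?nrm_ge0 //.
rewrite sqr_nrm dotpDl !dotpDr (dotpC y x) -!sqr_nrm.
have := dotp_le_nrm x y; lra.
Qed.

Lemma dotp_ge_of_nrmB_le x r eta :
  nrm (x - r) <= eta * nrm r -> (1 - eta) * nrm r ^+ 2 <= dotp x r.
Proof.
move=> near_r.
have -> : dotp x r = dotp (x - r) r + nrm r ^+ 2 by rewrite dotpBl sqr_nrm subrK.
have := dotp_le_nrm (- (x - r)) r; rewrite dotpNl nrmN.
have := ler_wpM2r (nrm_ge0 r) near_r; lra.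
Qed.

Lemma sqr_nrm_subD_le x y z :
  nrm (x - (y + z)) ^+ 2 - nrm x ^+ 2 <=
  - 2 * dotp x y + 2 * (nrm x * nrm z) + 2 * nrm y ^+ 2 + 2 * nrm z ^+ 2.
Proof.
have := dotpp_ge0 (y - z); have := dotp_le_nrm (- x) z.
rewrite nrmN dotpNl !sqr_nrm !(dotpBl, dotpBr, dotpDl, dotpDr) (dotpC y x)
  (dotpC z x) (dotpC z y); lra.
Qed.

Lemma inball_trans c c' r r' x :
  inball c r x -> inball c' r' c -> inball c' (r + r') x.
Proof.
rewrite /inball => xc cc'; rewrite -(subrK c x) -addrA.
by apply: le_trans (ler_nrmD _ _) _; apply: lerD.
Qed.

End InnerProduct.

Section Adjoint.
Variables (R : realType) (I J : finType) (A : I -> J -> R).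

Lemma dotp_app_adj h r : dotp (app A h) r = dotp h (adj A r).
Proof.
rewrite /dotp; under eq_bigr do rewrite ffunE mulr_suml.
rewrite exchange_big; apply: eq_bigr => j _.
by rewrite ffunE mulr_sumr; apply: eq_bigr => i _; rewrite mulrAC mulrC.
Qed.

Lemma appN h : app A (- h) = - app A h.
Proof.
by apply/ffunP => i; rewrite !ffunE -sumrN; apply: eq_bigr => j _; rewrite ffunE mulrN.
Qed.

End Adjoint.

Section Descent.
Variables (R : realType) (S I : finType).
Variables (F : {ffun S -> R} -> {ffun I -> R}) (Jac : {ffun S -> R} -> I -> S -> R).
Variables (v : {ffun I -> R}) (d : S -> S -> R) (Rr lam z0 z1 n0 n1 n2 : R).
Hypotheses (z0_ge0 : 0 <= z0) (n0_ge0 : 0 <= n0) (n1_ge0 : 0 <= n1) (n2_ge0 : 0 <= n2).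
Variable u : {ffun S -> R}.

Let r := F u - v.
Let g := adj (Jac u) r.
Let D := lap d Rr lam u u.
Let alpha := alpha_of F Jac v z0 z1 u.
Let beta := beta_of F v d Rr lam n0 n1 n2 u.

Lemma tangential_cone_dotp_ge (w : {ffun S -> R}) (eta : R) : F w = v ->
  nrm (F w - F u - app (Jac u) (w - u)) <= eta * nrm (F w - F u) ->
  (1 - eta) * nrm r ^+ 2 <= dotp (u - w) g.
Proof.
move=> Fw; rewrite Fw [nrm (v - _)]nrm_distC => tcc.
rewrite /g -dotp_app_adj; apply: dotp_ge_of_nrmB_le; rewrite nrm_distC.
have -> : r - app (Jac u) (u - w) = - (v - F u - app (Jac u) (w - u)).
  by rewrite -(opprB u w) appN opprK opprD opprB.
by rewrite nrmN.
Qed.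

(* MathComp's x / 0 = 0 makes this hold also when g = 0. *)
Lemma alpha_of_nrm_le : alpha * nrm g <= z0 * nrm r.
Proof.
have [g0|g_neq0] := eqVneq (nrm g) 0.
  by rewrite g0 mulr0 mulr_ge0 ?nrm_ge0.
have g_gt0 : 0 < nrm g by rewrite lt_neqAle eq_sym g_neq0 nrm_ge0.
by rewrite -ler_pdivlMr // ge_min lexx.
Qed.

Lemma beta_of_ge0 : 0 <= beta.
Proof.
rewrite /beta /beta_of; case: ifP => // _.
by rewrite !le_min !divr_ge0 ?mulr_ge0 ?sqr_ge0 ?nrm_ge0.
Qed.

Lemma beta_of_nrm_le_res : beta * nrm D <= n0 * nrm r ^+ 2.
Proof.
rewrite /beta /beta_of -/D; case: ifP => [D_neq0|_]; last first.
  by rewrite mul0r mulr_ge0 ?sqr_ge0.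
have D_gt0 : 0 < nrm D by rewrite lt_neqAle eq_sym D_neq0 nrm_ge0.
by rewrite -ler_pdivlMr // !ge_min lexx.
Qed.

Lemma beta_of_nrm_le : beta * nrm D <= n1.
Proof.
rewrite /beta /beta_of -/D; case: ifP => [D_neq0|_]; last by rewrite mul0r.
have D_gt0 : 0 < nrm D by rewrite lt_neqAle eq_sym D_neq0 nrm_ge0.
by rewrite -ler_pdivlMr // !ge_min lexx orbT.
Qed.

Lemma step_subr w :
  step F Jac v d Rr lam z0 z1 n0 n1 n2 u - w = (u - w) - (scalef alpha g + scalef beta D).
Proof. by apply/ffunP => i; rewrite /alpha /beta /g /D /r !ffunE; ring. Qed.

Lemma sqr_nrm_step_subr_le (w : {ffun S -> R}) (eta zeta wp : R) :
  0 <= zeta -> eta <= 1 -> zeta <= alpha -> nrm (u - w) <= wp ->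
  (1 - eta) * nrm r ^+ 2 <= dotp (u - w) g ->
  nrm (step F Jac v d Rr lam z0 z1 n0 n1 n2 u - w) ^+ 2 - nrm (u - w) ^+ 2 <=
  - (2 * ((1 - eta) * zeta - n0 * (wp + n1) - z0 ^+ 2)) * nrm r ^+ 2.
Proof.
move=> zeta_ge0 eta_le1 zeta_le e_le eg_ge.
have r2_ge0 := sqr_ge0 (nrm r).
have alpha_ge0 : 0 <= alpha := le_trans zeta_ge0 zeta_le.
have nrm_a : nrm (scalef alpha g) = alpha * nrm g by rewrite nrmZ ger0_norm.
have nrm_b : nrm (scalef beta D) = beta * nrm D by rewrite nrmZ ger0_norm ?beta_of_ge0.
have ag_ge0 : 0 <= alpha * nrm g by rewrite mulr_ge0 ?nrm_ge0.
have bD_ge0 : 0 <= beta * nrm D by rewrite mulr_ge0 ?nrm_ge0 ?beta_of_ge0.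
have alpha_dotp : zeta * ((1 - eta) * nrm r ^+ 2) <= alpha * dotp (u - w) g.
  by apply: ler_pM => //; rewrite mulr_ge0 // subr_ge0.
have cross : nrm (u - w) * (beta * nrm D) <= wp * (n0 * nrm r ^+ 2).
  by apply: ler_pM; rewrite ?nrm_ge0 ?beta_of_nrm_le_res.
have alpha_sq : (alpha * nrm g) ^+ 2 <= (z0 * nrm r) ^+ 2.
  by rewrite ler_sqr ?nnegrE ?mulr_ge0 ?nrm_ge0 ?alpha_of_nrm_le.
have beta_sq : (beta * nrm D) ^+ 2 <= n0 * nrm r ^+ 2 * n1.
  by rewrite expr2; apply: ler_pM; rewrite ?beta_of_nrm_le_res ?beta_of_nrm_le.
have := sqr_nrm_subD_le (u - w) (scalef alpha g) (scalef beta D).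
rewrite step_subr dotpZr nrm_a nrm_b; move: alpha_sq; rewrite exprMn; lra.
Qed.

End Descent.

Lemma standing_condition_gap (R : realFieldType) (eta zeta c H : R) :
  0 <= eta -> eta < 1 -> 0 <= c ->
  (1 + eta) / (1 - eta) < H -> c / (1 - eta - (1 + eta) / H) < zeta ->
  0 < (1 - eta) * zeta - c.
Proof.
move=> eta_ge0 eta_lt1 c_ge0 H_gt zeta_gt.
have H_gt0 : 0 < H by apply: lt_trans H_gt; rewrite divr_gt0 //; lra.
have q_ge0 : 0 <= (1 + eta) / H by rewrite divr_ge0 //; lra.
have gap_gt0 : 0 < 1 - eta - (1 + eta) / H.
  rewrite subr_gt0 ltr_pdivrMr //; rewrite ltr_pdivrMr ?subr_gt0 // in H_gt.
  by rewrite mulrC.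
rewrite ltr_pdivrMr // in zeta_gt; nra.
Qed.

Lemma sum_le_telescope (R : numDomainType) (e f : nat -> R) n :
  (forall k, e k.+1 - e k <= - f k) -> \sum_(k < n) f k <= e 0%N - e n.
Proof.
move=> decr; rewrite -opprB -(telescope_sumr _ (leq0n n)) big_mkord -sumrN.
by apply: ler_sum => k _; rewrite lerNr.
Qed.

Theorem mainTheorem3 (R : realType) (p q M : nat)
  (F : {ffun pixel p q -> R} -> {ffun 'I_M -> R})
  (Jac : {ffun pixel p q -> R} -> 'I_M -> pixel p q -> R)
  (v : {ffun 'I_M -> R}) (Psi : {ffun 'I_M -> R} -> {ffun pixel p q -> R})
  (d : pixel p q -> pixel p q -> R) (Rr lam : R)
  (z0 z1 n0 n1 n2 zeta : R) (wp B eta L H : R) (udag : {ffun pixel p q -> R}) :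
  (* metric d on the grid, R in (0,oo), lambda > 0 *)
  (forall a b, d a b = 0 <-> a = b) ->
  (forall a b, d a b = d b a) ->
  (forall a b c, d a c <= d a b + d b c) ->
  0 < Rr -> 0 < lam ->
  (* constants *)
  0 < z0 -> 0 < z1 -> 0 < n0 -> 0 < n1 -> 0 < n2 -> 0 < zeta ->
  0 < wp -> 0 < B -> 0 <= eta -> eta < 1 -> 0 <= L ->
  let u0 := Psi v in
  let u := iterate F Jac v Psi d Rr lam z0 z1 n0 n1 n2 in
  (forall k, zeta <= alpha_of F Jac v z0 z1 (u k)) ->
  (* (A1) *)
  (forall w, inball u0 (3 * wp) w -> frechet_at F (Jac w) w) ->
  (forall w, inball u0 (3 * wp) w -> forall eps, 0 < eps ->
     exists delta, 0 < delta /\ forall w', inball u0 (3 * wp) w' ->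
       nrm (w' - w) < delta ->
       forall h, nrm (app (Jac w') h - app (Jac w) h) <= eps * nrm h) ->
  (* (A2) ||F'(w)|| <= B *)
  (forall w, inball u0 (3 * wp) w -> forall h, nrm (app (Jac w) h) <= B * nrm h) ->
  (* (A3) tangential cone condition *)
  (forall w w', inball u0 (3 * wp) w -> inball u0 (3 * wp) w' ->
     nrm (F w - F w' - app (Jac w') (w - w')) <= eta * nrm (F w - F w')) ->
  (* (A4) ||F'(w) - F'(w')|| <= L ||w - w'|| *)
  (forall w w', inball u0 (3 * wp) w -> inball u0 (3 * wp) w' ->
     forall h, nrm (app (Jac w) h - app (Jac w') h) <= L * nrm (w - w') * nrm h) ->
  (* (A5) *)
  inball u0 wp udag -> F udag = v ->
  (* standing parameter condition *)
  (1 + eta) / (1 - eta) < H ->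
  (n0 * (wp + n1) + z0 ^+ 2) / (1 - eta - (1 + eta) / H) < zeta ->
  let C0 := (1 - eta) * zeta - n0 * (wp + n1) - z0 ^+ 2 in
  0 < C0 /\
  (forall k, inball udag wp (u k)) /\
  (forall k, nrm (u k.+1 - udag) ^+ 2 - nrm (u k - udag) ^+ 2
               <= - (2 * C0) * nrm (F (u k) - v) ^+ 2) /\
  (forall k, nrm (u k.+1 - udag) <= nrm (u k - udag)) /\
  (forall n, \sum_(k < n) nrm (F (u k) - v) ^+ 2 <= nrm (u0 - udag) ^+ 2 / (2 * C0)).
Proof.
(* Only (A3) and (A5) enter. *)
move=> _ _ _ _ _ z0_gt0 _ n0_gt0 n1_gt0 n2_gt0 zeta_gt0 wp_gt0 _ eta_ge0 eta_lt1 _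
  u0 u zeta_le _ _ _ tcc _ udag_in Fudag H_gt zeta_gt C0.
have C0_gt0 : 0 < C0.
  rewrite /C0 -addrA -opprD; apply: standing_condition_gap H_gt zeta_gt => //.
  by rewrite addr_ge0 ?sqr_ge0 // mulr_ge0 ?addr_ge0; lra.
have udag_in3 : inball u0 (3 * wp) udag.
  by move: udag_in; rewrite /inball => ?; lra.
have in3 w : inball udag wp w -> inball u0 (3 * wp) w.
  move=> /inball_trans /(_ udag_in) w_in; apply: le_trans w_in _; lra.
have descent k : inball udag wp (u k) ->
    nrm (u k.+1 - udag) ^+ 2 - nrm (u k - udag) ^+ 2
      <= - (2 * C0) * nrm (F (u k) - v) ^+ 2.
  move=> uk_in; apply: (sqr_nrm_step_subr_le d Rr lam (ltW z0_gt0) (ltW n0_gt0)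
    (ltW n1_gt0) (ltW n2_gt0) (ltW zeta_gt0) (ltW eta_lt1) (zeta_le k) uk_in).
  exact: tangential_cone_dotp_ge Fudag (tcc _ _ udag_in3 (in3 _ uk_in)).
have descent_ge0 k : 0 <= 2 * C0 * nrm (F (u k) - v) ^+ 2.
  by have := sqr_ge0 (nrm (F (u k) - v)); nra.
have u_in k : inball udag wp (u k).
  elim: k => [|k IH]; first by rewrite /inball nrm_distC.
  apply: le_trans (IH); rewrite -ler_sqr ?nnegrE ?nrm_ge0 //.
  by have := descent k IH; have := descent_ge0 k; lra.
have monotone k : nrm (u k.+1 - udag) <= nrm (u k - udag).
  rewrite -ler_sqr ?nnegrE ?nrm_ge0 //.
  by have := descent k (u_in k); have := descent_ge0 k; lra.
split; first exact: C0_gt0.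
split; first exact: u_in.
split; first by move=> k; exact: descent.
split; first exact: monotone.
move=> n.
rewrite ler_pdivlMr ?mulr_gt0 // mulrC mulr_sumr.
have telescoped := @sum_le_telescope _ (fun k => nrm (u k - udag) ^+ 2)
  (fun k => 2 * C0 * nrm (F (u k) - v) ^+ 2) n.
apply: le_trans (telescoped _) _.
  by move=> k; have := descent k (u_in k); rewrite mulNr.
by rewrite lerBlDr lerDl sqr_ge0.
Qed.
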